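(* Let $\mathbb{F}_q$ have characteristic $p$, let $n,v\ge1$, $\mathcal{R}=\mathbb{F}_q[x_1,\dots,x_v]/\langle x_1^{i_1}\cdots x_v^{i_v}\mid i_1+\dots+i_v=n\rangle$, and let $l\in\{1,\dots,v\}$. Then \[ \mathbb{E}_{\chi\in\widehat{\mathcal{R}_\times}}\left[\left|\sum_{a\in\mathbb{F}_q^*}\chi(x_l-a)\right|\right]\le\frac{q-1}{\sqrt{p-1}}, \] where the expectation is over $\chi$ chosen uniformly from all characters of the unit group $\mathcal{R}_\times$.
   Context: For $a\in\mathbb{F}_q^*$, $x_l-a$ is a unit of $\mathcal{R}$. $\widehat{\mathcal{R}_\times}$ denotes the group of homomorphisms from $\mathcal{R}_\times$ to the complex unit circle. *)

From HB Require Import structures.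
From mathcomp Require Import all_boot all_order all_algebra all_field.
From mathcomp Require Import mpoly.
Set Implicit Arguments. Unset Strict Implicit. Unset Printing Implicit Defensive.
Import Order.TTheory GRing.Theory Num.Theory.
Local Open Scope ring_scope.

(* The ring R = F[x_1..x_v] / < all monomials of total degree n >, realized
   as its standard model: F-linear combinations of the monomials of total
   degree < n, multiplied as polynomials with all monomials of degree >= n
   discarded. *)

Definition TMon (v n : nat) := 'X_{1..v < n}.

Definition TR (F : finFieldType) (v n : nat) := {ffun TMon v n -> F}.

Definition tr_mul (F : finFieldType) (v n : nat) (f g : TR F v n) : TR F v n :=
  [ffun m : TMon v n => \sum_(m1 : TMon v n) \sum_(m2 : TMon v n |
       ((m1 : 'X_{1..v}) + (m2 : 'X_{1..v}) == (m : 'X_{1..v}))%MM) f m1 * g m2].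

Definition tr_const (F : finFieldType) (v n : nat) (a : F) : TR F v n :=
  [ffun m : TMon v n => if (m : 'X_{1..v}) == 0%MM then a else 0].

Definition tr_one (F : finFieldType) (v n : nat) : TR F v n := tr_const v n 1.

Definition tr_var (F : finFieldType) (v n : nat) (l : 'I_v) : TR F v n :=
  [ffun m : TMon v n => if (m : 'X_{1..v}) == U_(l)%MM then 1 else 0].

Definition tr_sub (F : finFieldType) (v n : nat) (f g : TR F v n) : TR F v n :=
  [ffun m => f m - g m].

Definition tr_unit (F : finFieldType) (v n : nat) (f : TR F v n) : bool :=
  [exists g : TR F v n, tr_mul f g == tr_one F v n].

Definition TUnits (F : finFieldType) (v n : nat) := {f : TR F v n | tr_unit f}.

Definition is_character (F : finFieldType) (v n : nat)
    (chi : {ffun TUnits F v n -> algC}) : Prop :=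
  (forall a b c : TUnits F v n, val c = tr_mul (val a) (val b) ->
      chi c = chi a * chi b) /\
  (forall a : TUnits F v n, `|chi a| = 1).

(* evaluation of a character at an element of R (0 off the units; only
   used at units) *)
Definition ev_char (F : finFieldType) (v n : nat)
    (chi : {ffun TUnits F v n -> algC}) (r : TR F v n) : algC :=
  if @insub _ (@tr_unit F v n) (TUnits F v n) r is Some u then chi u else 0.

From HB Require Import structures.
From mathcomp Require Import all_boot all_order all_algebra all_field.
From mathcomp Require Import mpoly.
From mathcomp Require Import all_fingroup cyclic all_character.
Set Implicit Arguments. Unset Strict Implicit. Unset Printing Implicit Defensive.
Import Order.TTheory GRing.Theory Num.Theory.
Local Open Scope ring_scope.

(* By column orthogonality of the characters of the finite abelian group R_x,
   the mean of |sum_(a != 0) chi(x_l - a)|^2 over all characters counts the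
   a != 0 for which x_l - a is a unit (these units are pairwise distinct), so
   it is at most q - 1.  Cauchy-Schwarz bounds the mean of the absolute value by
   sqrt(q - 1), which is at most (q - 1) / sqrt(p - 1) since p divides q.
   Column orthogonality is proved directly: if chi0(g) != chi0(h), multiplying
   by chi0 permutes the characters and scales the sum by
   chi0(g) chi0(h)^* != 1, so the sum vanishes; such a chi0 exists because the
   irreducible characters of an abelian group are linear and their kernels meet
   trivially. *)

Section TruncatedRing.
Variables (F : finFieldType) (v n : nat).
Local Notation TM := (TMon v n).
Local Notation R := (TR F v n).

Lemma tr_mulE (f g : R) (m : TM) : tr_mul f g m =
  \sum_(m1 : TM) \sum_(m2 : TM) (f m1 * g m2) *+ ((m1 + m2)%MM == m :> 'X_{1..v}).
Proof.
rewrite ffunE; apply: eq_bigr => m1 _; rewrite big_mkcond /=.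
by apply: eq_bigr => m2 _; rewrite mulrb.
Qed.

Lemma sum_bmnm_addm_eq (d e : 'X_{1..v}) (m : TM) :
  (\sum_(k : TM) ((d == k :> 'X_{1..v}) * ((e + k)%MM == m :> 'X_{1..v})))%N =
  ((e + d)%MM == m :> 'X_{1..v}).
Proof.
have [edm | ned] := eqVneq (e + d)%MM (m : 'X_{1..v}); last first.
  by apply: big1 => k _; case: eqVneq => [<-|]; rewrite ?(negbTE ned) ?muln0.
have d_lt_n : (mdeg d < n)%N.
  by apply: leq_ltn_trans (bmdeg m); rewrite -edm mdegD leq_addl.
rewrite (bigD1 (BMultinom d_lt_n)) //= eqxx edm eqxx big1 // => k.
by rewrite -val_eqE /= eq_sym => /negbTE ->.
Qed.

Lemma tr_mulC : commutative (@tr_mul F v n).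
Proof.
move=> f g; apply/ffunP => m; rewrite !tr_mulE exchange_big /=.
by apply: eq_bigr => a _; apply: eq_bigr => b _; rewrite addmC mulrC.
Qed.

Lemma tr_mul_expand3 (f g h : R) (m : TM) : tr_mul f (tr_mul g h) m =
  \sum_(a : TM) \sum_(b : TM) \sum_(c : TM)
     (f a * g b * h c) *+ ((a + b + c)%MM == m :> 'X_{1..v}).
Proof.
rewrite tr_mulE; apply: eq_bigr => a _.
under eq_bigr => k _ do rewrite tr_mulE mulr_sumr -sumrMnl.
rewrite exchange_big; apply: eq_bigr => b _.
under eq_bigr => k _ do rewrite mulr_sumr -sumrMnl.
rewrite exchange_big; apply: eq_bigr => c _.
under eq_bigr => k _ do rewrite mulrnAr mulrA -mulrnA.
by rewrite sumrMnr sum_bmnm_addm_eq addmA.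
Qed.

Lemma tr_mulA : associative (@tr_mul F v n).
Proof.
move=> f g h; apply/ffunP => m.
rewrite [tr_mul (tr_mul f g) h]tr_mulC !tr_mul_expand3 [RHS]exchange_big.
apply: eq_bigr => a _; rewrite [RHS]exchange_big; apply: eq_bigr => b _.
apply: eq_bigr => c _.
by rewrite -[(c + a + b)%MM]addmA [(c + _)%MM]addmC [f a * g b * h c]mulrC mulrA.
Qed.

Lemma tr_mul1 : left_id (tr_one F v n) (@tr_mul F v n).
Proof.
move=> g; apply/ffunP => m; rewrite tr_mulE.
have zero_lt_n : (mdeg (0%MM : 'X_{1..v}) < n)%N.
  by rewrite mdeg0 (leq_ltn_trans _ (bmdeg m)).
rewrite (bigD1 (BMultinom zero_lt_n)) //= [X in _ + X]big1 ?addr0.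
  rewrite (bigD1 m) //= ffunE eqxx mul1r add0m eqxx big1 ?addr0 // => k.
  by rewrite add0m -val_eqE /= eq_sym => /negbTE ->.
move=> a a0; apply: big1 => b _; rewrite ffunE.
have /negbTE -> : (a : 'X_{1..v}) != 0%MM by rewrite -val_eqE in a0.
by rewrite mul0r mul0rn.
Qed.

Definition TU : Type := TUnits F v n.
HB.instance Definition _ := Finite.on TU.

Lemma tr_unit1 : tr_unit (tr_one F v n).
Proof. by apply/existsP; exists (tr_one F v n); rewrite tr_mul1. Qed.

Lemma tr_unitM (u w : TU) : tr_unit (tr_mul (val u) (val w)).
Proof.
case/existsP: (valP u) => u' /eqP uu'; case/existsP: (valP w) => w' /eqP ww'.
apply/existsP; exists (tr_mul u' w'); apply/eqP.
have -> : tr_mul (tr_mul (val u) (val w)) (tr_mul u' w') =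
    tr_mul (tr_mul (val u) u') (tr_mul (val w) w').
  by rewrite -!tr_mulA; congr tr_mul; rewrite !tr_mulA (tr_mulC (val w) u').
by rewrite uu' ww' tr_mul1.
Qed.

Definition tr_inv (u : TU) : R := xchoose (existsP (valP u)).

Lemma tr_mulV (u : TU) : tr_mul (val u) (tr_inv u) = tr_one F v n.
Proof. exact/eqP/(xchooseP (existsP (valP u))). Qed.

Lemma tr_unitV (u : TU) : tr_unit (tr_inv u).
Proof. by apply/existsP; exists (val u); rewrite tr_mulC tr_mulV. Qed.

Definition tu_mul (u w : TU) : TU := exist _ (tr_mul (val u) (val w)) (tr_unitM u w).
Definition tu_one : TU := exist _ (tr_one F v n) tr_unit1.
Definition tu_inv (u : TU) : TU := exist _ (tr_inv u) (tr_unitV u).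

Lemma tu_mulA : associative tu_mul.
Proof. by move=> a b c; apply: val_inj; rewrite /= tr_mulA. Qed.

Lemma tu_mul1 : left_id tu_one tu_mul.
Proof. by move=> a; apply: val_inj; rewrite /= tr_mul1. Qed.

Lemma tu_mulVl : left_inverse tu_one tu_inv tu_mul.
Proof. by move=> a; apply: val_inj; rewrite /= tr_mulC tr_mulV. Qed.

HB.instance Definition _ := Finite_isGroup.Build TU tu_mulA tu_mul1 tu_mulVl.

Lemma TU_abelian : abelian [set: TU].
Proof. by apply/centsP => x _ y _; apply: val_inj; apply: tr_mulC. Qed.

Lemma lin_char_is_character (xi : 'CF([set: TU])) :
  xi \is a linear_char -> is_character [ffun u : TUnits F v n => xi (u : TU)].
Proof.
move=> lin_xi; split=> [a b c abc | a]; rewrite !ffunE; last first.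
  by rewrite normC_lin_char ?inE.
have -> : (c : TU) = ((a : TU) * (b : TU))%g by apply: val_inj.
by rewrite lin_charM ?inE.
Qed.

Lemma character_separates (x y : TU) : x != y ->
  exists chi : {ffun TUnits F v n -> algC}, is_character chi /\ chi x != chi y.
Proof.
move=> xy; set z := (x * y^-1)%g.
have z1 : z != 1%g by rewrite /z -eq_mulgV1.
have [i chi_z] : exists i : Iirr [set: TU], z \notin cfker 'chi_i.
  apply/existsP; apply: contraR z1 => /existsPn z_ker.
  have : z \in \bigcap_i cfker 'chi[[set: TU]]_i.
    by apply/bigcapP => i _; exact/negbNE/z_ker.
  by rewrite TI_cfker_irr inE.
have lin_i := char_abelianP _ TU_abelian i.
exists [ffun u : TUnits F v n => 'chi_i (u : TU)].
split; first exact: lin_char_is_character.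
rewrite !ffunE; apply: contra chi_z => /eqP chi_xy.
have chi_y0 : 'chi_i y != 0 by rewrite lin_char_neq0 ?inE.
rewrite cfkerEirr inE lin_char1 //; apply/eqP/(mulIf chi_y0).
by rewrite -lin_charM ?inE // mulgKV mul1r.
Qed.

End TruncatedRing.

Section CharacterSums.
Variables (F : finFieldType) (v n : nat) (s : seq {ffun TUnits F v n -> algC}).
Hypotheses (s_uniq : uniq s) (s_chars : forall chi, chi \in s <-> is_character chi).

Local Notation CF := {ffun TUnits F v n -> algC}.

Lemma perm_eq_mul_character (chi0 : CF) :
  is_character chi0 -> perm_eq s [seq [ffun u => chi0 u * chi u] | chi : CF <- s].
Proof.
move=> [chi0M chi0_norm]; set mul0 := fun chi : CF => [ffun u => chi0 u * chi u].
have mul0_char chi : is_character chi -> is_character (mul0 chi).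
  move=> [chiM chi_norm]; split=> [a b c abc | a]; rewrite !ffunE.
    by rewrite (chi0M a b c abc) (chiM a b c abc) mulrACA.
  by rewrite normrM chi0_norm chi_norm mulr1.
have mul0_inj : injective mul0.
  move=> chi chi' /ffunP eq_chi; apply/ffunP => u; move: (eq_chi u); rewrite !ffunE.
  by apply: mulfI; rewrite -normr_eq0 chi0_norm oner_eq0.
have mul0_uniq : uniq (map mul0 s) by rewrite map_inj_uniq.
have mul0_sub : {subset map mul0 s <= s}.
  by move=> _ /mapP [chi /s_chars chi_char ->]; apply/s_chars/mul0_char.
apply: uniq_perm => //.
have [_ eq_s] := uniq_min_size mul0_uniq mul0_sub (eq_leq (esym (size_map mul0 s))).
by move=> chi; rewrite eq_s.
Qed.

Lemma sum_character_mul_conjC (g h : TUnits F v n) :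
  \sum_(chi <- s) chi g * (chi h)^* = if g == h then (size s)%:R else 0.
Proof.
have [<-|gh] := eqVneq.
  under eq_big_seq => chi /s_chars [_ chi_norm] do rewrite -normCK chi_norm expr1n.
  by rewrite big_const_seq count_predT iter_addr_0.
have [chi0 [chi0_char chi0_gh]] := character_separates gh.
set c := chi0 g * (chi0 h)^*.
have c1 : c != 1.
  apply: contra chi0_gh => /eqP c_1; apply/eqP.
  have [_ chi0_norm] := chi0_char.
  by rewrite -[chi0 g]mulr1 -(expr1n _ 2) -(chi0_norm h) normCKC mulrA -/c c_1 mul1r.
set S := \sum_(chi <- s) _.
have cS : c * S = S.
  rewrite {2}/S (perm_big _ (perm_eq_mul_character chi0_char)) big_map mulr_sumr.
  by apply: eq_bigr => chi _; rewrite !ffunE rmorphM /= mulrACA.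
have : (1 - c) * S = 0 by rewrite mulrBl mul1r cS subrr.
by move/eqP; rewrite mulf_eq0 subr_eq0 eq_sym (negbTE c1) => /eqP.
Qed.

Variable l : 'I_v.
Hypothesis n_gt0 : (0 < n)%N.
Local Notation shift a := (tr_sub (tr_var F n l) (tr_const v n a)).

Lemma tr_var_sub_const_inj : injective (fun a => shift a).
Proof.
have zero_lt_n : (mdeg (0%MM : 'X_{1..v}) < n)%N by rewrite mdeg0.
move=> a b /ffunP/(_ (BMultinom zero_lt_n)); rewrite !ffunE /= eq_sym mnm1_eq0 eqxx.
by rewrite !sub0r => /oppr_inj.
Qed.

Lemma sum_ev_char_shift_mul_conjC (a b : F) :
  \sum_(chi <- s) ev_char chi (shift a) * (ev_char chi (shift b))^* =
  if (a == b) && tr_unit (shift a) then (size s)%:R else 0.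
Proof.
rewrite /ev_char; case: insubP => [ua ua_unit ua_val | a_nunit]; last first.
  by rewrite big1 => [|chi _]; rewrite ?mul0r // (negbTE a_nunit) andbF.
case: insubP => [ub ub_unit ub_val | b_nunit].
  rewrite sum_character_mul_conjC ua_unit andbT -val_eqE ua_val ub_val.
  by rewrite (inj_eq tr_var_sub_const_inj).
rewrite big1 => [|chi _]; last by rewrite conjC0 mulr0.
by case: eqVneq => [eq_ab|] //=; rewrite -eq_ab ua_unit in b_nunit.
Qed.

Lemma sum_norm_ev_char_shifts_sqr :
  \sum_(chi <- s) `| \sum_(a : F | a != 0) ev_char chi (shift a) | ^+ 2
    <= (size s)%:R * (#|F|.-1)%:R.
Proof.
under eq_bigr => chi _ do rewrite normCK rmorph_sum mulr_suml.
under eq_bigr => chi _ do under eq_bigr => a _ do rewrite mulr_sumr.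
rewrite exchange_big /=.
under eq_bigr => a _ do rewrite exchange_big /=.
under eq_bigr => a _ do under eq_bigr => b _ do rewrite sum_ev_char_shift_mul_conjC.
have row_le a : a != 0 -> \sum_(b : F | b != 0)
    (if (a == b) && tr_unit (shift a) then (size s)%:R else 0) <= (size s)%:R :> algC.
  move=> a0; rewrite (bigD1 a) //= eqxx big1 ?addr0 => [|b /andP[_ ba]].
    by case: tr_unit; rewrite ?ler0n.
  by rewrite eq_sym (negbTE ba).
apply: le_trans (ler_sum _ row_le) _.
by rewrite sumr_const cardC1 mulr_natr.
Qed.

End CharacterSums.

Lemma pchar_dvd_card (R : finNzRingType) (p : nat) : p \in [pchar R] -> (p %| #|R|)%N.
Proof.
move=> pchar_p; rewrite (dvdn_pcharf pchar_p) -FinRing.zmodXgE -FinRing.zmod1gE.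
by rewrite -order_dvdn -cardsT order_dvdG ?inE.
Qed.

Lemma mean_le_sqrtC (C : numClosedFieldType) (I : Type) (s : seq I) (x : I -> C) (Q : C) :
  0 < Q -> (forall i, 0 <= x i) -> \sum_(i <- s) x i ^+ 2 <= (size s)%:R * Q ->
  (\sum_(i <- s) x i) / (size s)%:R <= sqrtC Q.
Proof.
move=> Q_gt0 x_ge0 sum_sqr_le; set c := sqrtC Q.
have c_gt0 : 0 < c by rewrite sqrtC_gt0.
have cQ : c ^+ 2 = Q by rewrite sqrtCK.
have amgm i : (x i * c) *+ 2 <= x i ^+ 2 + c ^+ 2.
  exact: real_leif_mean_square_scaled (ger0_real (x_ge0 i)) (ger0_real (ltW c_gt0)).
have sum_le : (\sum_(i <- s) x i) * c <= (size s)%:R * Q.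
  have : ((\sum_(i <- s) x i) * c) *+ 2 <= ((size s)%:R * Q) *+ 2.
    rewrite mulr_suml -sumrMnl (le_trans (ler_sum _ (fun i _ => amgm i))) //.
    rewrite big_split /= big_const_seq count_predT iter_addr_0 cQ.
    by rewrite mulr2n -[Q *+ _]mulr_natl lerD2r.
  by rewrite lerMn2r.
have [->|s_gt0] := posnP (size s); first by rewrite invr0 mulr0 ltW.
rewrite ler_pdivrMr ?ltr0n // -(ler_pM2r c_gt0) (le_trans sum_le) //.
by rewrite mulrAC -expr2 cQ mulrC.
Qed.

Lemma sqrtC_le_div_sqrtC (C : numClosedFieldType) (a b : C) :
  0 < b -> b <= a -> sqrtC a <= a / sqrtC b.
Proof.
move=> b_gt0 b_le_a; have a_ge0 : 0 <= a by rewrite (le_trans (ltW b_gt0)).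
rewrite ler_pdivlMr ?sqrtC_gt0 // -{2}(sqrtCK a) expr2 ler_wpM2l ?sqrtC_ge0 //.
by rewrite ler_sqrtC ?nnegrE ?(ltW b_gt0).
Qed.

Theorem lemma6p14 (F : finFieldType) (p : nat) (hp : prime p)
    (hchar : p \in [pchar F]) (n v : nat) (hn : (0 < n)%N) (hv : (0 < v)%N)
    (l : 'I_v) (s : seq {ffun TUnits F v n -> algC}) (hs_uniq : uniq s)
    (hs_all : forall chi, chi \in s <-> is_character chi) :
  (\sum_(chi <- s)
      `| \sum_(a : F | a != 0) ev_char chi (tr_sub (tr_var F n l) (tr_const v n a)) |)
    / (size s)%:R
  <= (#|F|.-1)%:R / sqrtC (p.-1)%:R.
Proof.
have p_le_q : (p <= #|F|)%N := dvdn_leq (ltnW (finNzRing_gt1 F)) (pchar_dvd_card hchar).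
have p1_gt0 : 0 < (p.-1)%:R :> algC by rewrite ltr0n -subn1 subn_gt0 (prime_gt1 hp).
have q1_gt0 : 0 < (#|F|.-1)%:R :> algC.
  by rewrite ltr0n -subn1 subn_gt0 (leq_trans (prime_gt1 hp)).
apply: le_trans (mean_le_sqrtC q1_gt0 (fun _ => normr_ge0 _)
  (sum_norm_ev_char_shifts_sqr hs_uniq hs_all l hn)) _.
by rewrite sqrtC_le_div_sqrtC // ler_nat -!subn1 leq_sub2r.
Qed.
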